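(* Let $\Gamma$ act ergodically by measure preserving maps on a probability space $(X,\mu)$. Let $S$ be a finite symmetric generating set of $\Gamma$, let $H$ be a subgroup of $\Gamma$ of index $k$, let $C$ be a right coset representative system for $H$ in $\Gamma$ and let $T=N(S,C)$. Then for every measurable $A\subseteq X$ with $0<\mu(A)\le 1/(2k)$, $$\frac{\mu(AT\setminus A)}{\mu(A)}\ge\frac{\mathrm{h}(X,S)}{k}.$$
   Context: Actions are right actions; $AS=\{as: a\in A, s\in S\}$. Cheeger constant: $\mathrm{h}(X,S)=\inf\{\mu(AS\setminus A)/\mu(A): 0<\mu(A)\le1/2\}$. Nielsen–Schreier set: for $s\in S$, $c\in C$ let $p_{c,s}\in C$ be the unique element with $csp_{c,s}^{-1}\in H$; $N(S,C)=\{csp_{c,s}^{-1}: s\in S, c\in C\}$. *)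

From Stdlib Require Import Reals List.
Open Scope R_scope.
Set Implicit Arguments.

Record is_group (G : Type) (mul : G -> G -> G) (inv : G -> G) (one : G) : Prop := {
  grp_assoc : forall a b c, mul a (mul b c) = mul (mul a b) c;
  grp_mul1g : forall a, mul one a = a;
  grp_mulg1 : forall a, mul a one = a;
  grp_mulVg : forall a, mul (inv a) a = one;
  grp_mulgV : forall a, mul a (inv a) = one
}.

Definition is_subgroup (G : Type) (mul : G -> G -> G) (inv : G -> G) (one : G)
  (H : G -> Prop) : Prop :=
  H one /\ (forall a b, H a -> H b -> H (mul a b)) /\ (forall a, H a -> H (inv a)).

Definition symmetric_set (G : Type) (inv : G -> G) (S : list G) : Prop :=
  forall s, In s S -> In (inv s) S.

Definition generates (G : Type) (mul : G -> G -> G) (one : G) (S : list G) : Prop :=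
  forall g, exists l : list G, (forall s, In s l -> In s S) /\ g = fold_right mul one l.

(* C is a right coset representative system for H (right cosets H c):
   each g lies in H c for exactly one c in C, and C has no repetitions,
   so the index of H is length C. *)
Definition right_transversal (G : Type) (mul : G -> G -> G) (inv : G -> G)
  (H : G -> Prop) (C : list G) : Prop :=
  NoDup C /\ forall g, exists! c, In c C /\ H (mul g (inv c)).

Definition NS_set (G : Type) (mul : G -> G -> G) (inv : G -> G)
  (H : G -> Prop) (S C : list G) : G -> Prop :=
  fun t => exists s c p, In s S /\ In c C /\ In p C /\
    H (mul (mul c s) (inv p)) /\ t = mul (mul c s) (inv p).

Definition set_union_seq (X : Type) (F : nat -> X -> Prop) : X -> Prop :=
  fun x => exists n, F n x.

Record is_sigma_algebra (X : Type) (M : (X -> Prop) -> Prop) : Prop := {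
  sa_full : M (fun _ => True);
  sa_compl : forall A, M A -> M (fun x => ~ A x);
  sa_union : forall F : nat -> X -> Prop, (forall n, M (F n)) -> M (set_union_seq F)
}.

Record is_probability (X : Type) (M : (X -> Prop) -> Prop) (mu : (X -> Prop) -> R) : Prop := {
  pr_sigma : is_sigma_algebra M;
  pr_nonneg : forall A, M A -> 0 <= mu A;
  pr_empty : mu (fun _ => False) = 0;
  pr_sigma_add : forall F : nat -> X -> Prop, (forall n, M (F n)) ->
     (forall n m x, n <> m -> F n x -> F m x -> False) ->
     infinite_sum (fun n => mu (F n)) (mu (set_union_seq F));
  pr_full : mu (fun _ => True) = 1
}.

Definition is_right_action (G X : Type) (mul : G -> G -> G) (one : G)
  (act : X -> G -> X) : Prop :=
  (forall x, act x one = x) /\ (forall x g h, act (act x g) h = act x (mul g h)).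

Definition preimage_act (G X : Type) (act : X -> G -> X) (g : G) (A : X -> Prop) : X -> Prop :=
  fun x => A (act x g).

Definition measure_preserving_action (G X : Type) (M : (X -> Prop) -> Prop)
  (mu : (X -> Prop) -> R) (act : X -> G -> X) : Prop :=
  forall g A, M A -> M (preimage_act act g A) /\ mu (preimage_act act g A) = mu A.

Definition ergodic (G X : Type) (M : (X -> Prop) -> Prop)
  (mu : (X -> Prop) -> R) (act : X -> G -> X) : Prop :=
  forall A, M A -> (forall g x, A (act x g) <-> A x) -> mu A = 0 \/ mu A = 1.

Definition set_act (G X : Type) (act : X -> G -> X) (A : X -> Prop) (T : G -> Prop) : X -> Prop :=
  fun x => exists a t, A a /\ T t /\ x = act a t.

Definition setminus (X : Type) (A B : X -> Prop) : X -> Prop := fun x => A x /\ ~ B x.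

Definition cheeger_ratios (G X : Type) (M : (X -> Prop) -> Prop)
  (mu : (X -> Prop) -> R) (act : X -> G -> X) (S : list G) : R -> Prop :=
  fun r => exists A, M A /\ 0 < mu A /\ mu A <= 1/2 /\
    r = mu (setminus (set_act act A (fun s => In s S)) A) / mu A.

Definition is_inf (E : R -> Prop) (m : R) : Prop :=
  (forall r, E r -> m <= r) /\ (forall m', (forall r, E r -> m' <= r) -> m' <= m).

Definition cheeger_constant (G X : Type) (M : (X -> Prop) -> Prop)
  (mu : (X -> Prop) -> R) (act : X -> G -> X) (S : list G) (m : R) : Prop :=
  is_inf (cheeger_ratios M mu act S) m.

(* Put B := AC, the union of the k translates A c (c in C).  Then
   mu(A) <= mu(B) <= k mu(A) <= 1/2, so the Cheeger inequality applies to B: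
   h mu(A) <= h mu(B) <= mu(BS \ B).  If x = a c s lies in BS \ B and p in C is
   the representative with t = c s p^-1 in H, then x = (a t) p with t in T and
   a t not in A; hence BS \ B is contained in (AT \ A)C, whose measure is at
   most k mu(AT \ A). *)

From Stdlib Require Import Reals List Lra Lia Classical FunctionalExtensionality
  PropExtensionality.
Open Scope R_scope.

Lemma set_ext {X : Type} (A B : X -> Prop) : (forall x, A x <-> B x) -> A = B.
Proof.
  intro HAB; apply functional_extensionality; intro x.
  apply propositional_extensionality, HAB.
Qed.

Definition bigcup_list {X I : Type} (l : list I) (F : I -> X -> Prop) : X -> Prop :=
  fun x => exists i, In i l /\ F i x.

Lemma bigcup_list_nil {X I : Type} (F : I -> X -> Prop) :
  bigcup_list nil F = fun _ => False.
Proof. apply set_ext; intro x; split; [intros [i [[] _]] | tauto]. Qed.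

Lemma bigcup_list_cons {X I : Type} (i : I) (l : list I) (F : I -> X -> Prop) :
  bigcup_list (i :: l) F = fun x => F i x \/ bigcup_list l F x.
Proof.
  apply set_ext; intro x; split.
  - intros [j [[<- | Hj] Hx]]; [left | right; exists j]; auto.
  - intros [Hx | [j [Hj Hx]]]; [exists i | exists j]; simpl; auto.
Qed.

Section Probability.

Context {X : Type} {M : (X -> Prop) -> Prop} {mu : (X -> Prop) -> R}.
Hypothesis Hp : is_probability M mu.

Lemma measurable_compl {A : X -> Prop} : M A -> M (fun x => ~ A x).
Proof. apply (sa_compl (pr_sigma Hp)). Qed.

Lemma measurable_empty : M (fun _ => False).
Proof.
  replace (fun _ : X => False) with (fun x : X => ~ (fun _ : X => True) x).
  - apply measurable_compl, (sa_full (pr_sigma Hp)).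
  - apply set_ext; tauto.
Qed.

Lemma measurable_union {A B : X -> Prop} : M A -> M B -> M (fun x => A x \/ B x).
Proof.
  intros HA HB.
  replace (fun x => A x \/ B x)
    with (set_union_seq (fun n : nat => match n with 0%nat => A | _ => B end)).
  - apply (sa_union (pr_sigma Hp)); intros [|n]; auto.
  - apply set_ext; intro x; split.
    + intros [[|n] Hx]; auto.
    + intros [Hx | Hx]; [exists 0%nat | exists 1%nat]; auto.
Qed.

Lemma measurable_setminus {A B : X -> Prop} : M A -> M B -> M (setminus A B).
Proof.
  intros HA HB.
  replace (setminus A B) with (fun x => ~ ((fun y => ~ A y) x \/ B x)).
  - apply measurable_compl, measurable_union; [apply measurable_compl|]; auto.
  - apply set_ext; intro x; unfold setminus.
    destruct (classic (A x)); tauto.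
Qed.

Lemma measurable_and_const (P : Prop) {A : X -> Prop} : M A -> M (fun x => P /\ A x).
Proof.
  intro HA; destruct (classic P) as [HP | HP].
  - replace (fun x => P /\ A x) with A; [auto | apply set_ext; tauto].
  - replace (fun x => P /\ A x) with (fun _ : X => False);
      [apply measurable_empty | apply set_ext; tauto].
Qed.

Lemma measurable_bigcup_list {I : Type} (l : list I) (F : I -> X -> Prop) :
  (forall i, In i l -> M (F i)) -> M (bigcup_list l F).
Proof.
  induction l as [|i l IH]; intro HF.
  - rewrite bigcup_list_nil; apply measurable_empty.
  - rewrite bigcup_list_cons.
    apply measurable_union; [apply HF; left | apply IH; intros; apply HF; right]; auto.
Qed.

Lemma measure_union_disjoint {A B : X -> Prop} : M A -> M B ->
  (forall x, A x -> B x -> False) -> mu (fun x => A x \/ B x) = mu A + mu B.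
Proof.
  intros HA HB Hdisj.
  set (F := fun n : nat => match n with 0%nat => A | 1%nat => B | _ => fun _ => False end).
  assert (HF : forall n, M (F n)) by (intros [|[|n]]; simpl; auto using measurable_empty).
  assert (HFdisj : forall n m x, n <> m -> F n x -> F m x -> False)
    by (intros [|[|n]] [|[|m]] x Hnm; simpl; intros; try lia; eauto).
  assert (HUF : set_union_seq F = fun x => A x \/ B x).
  { apply set_ext; intro x; split.
    - intros [[|[|n]] Hx]; simpl in Hx; tauto.
    - intros [Hx | Hx]; [exists 0%nat | exists 1%nat]; auto. }
  assert (Hpartial : forall n, sum_f_R0 (fun n => mu (F n)) (S n) = mu A + mu B).
  { induction n as [|n IH]; [reflexivity|].
    simpl in IH |- *; rewrite IH, (pr_empty Hp); ring. }
  apply (uniqueness_sum (fun n => mu (F n))).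
  - rewrite <- HUF; apply (pr_sigma_add Hp); auto.
  - intros eps Heps; exists 1%nat; intros [|n] Hn; [lia|].
    rewrite Hpartial, R_dist_eq; exact Heps.
Qed.

Lemma measure_mono {A B : X -> Prop} : M A -> M B ->
  (forall x, A x -> B x) -> mu A <= mu B.
Proof.
  intros HA HB HAB.
  replace B with (fun x => A x \/ setminus B A x).
  - rewrite measure_union_disjoint; auto using measurable_setminus.
    + pose proof (pr_nonneg Hp _ (measurable_setminus HB HA)); lra.
    + intros x Hx [_ Hnx]; auto.
  - apply set_ext; intro x; unfold setminus; destruct (classic (A x)); intuition.
Qed.

Lemma measure_union_le {A B : X -> Prop} : M A -> M B ->
  mu (fun x => A x \/ B x) <= mu A + mu B.
Proof.
  intros HA HB.
  replace (fun x => A x \/ B x) with (fun x => A x \/ setminus B A x).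
  - rewrite measure_union_disjoint; auto using measurable_setminus.
    + pose proof (measure_mono (measurable_setminus HB HA) HB (fun x Hx => proj1 Hx)); lra.
    + intros x Hx [_ Hnx]; auto.
  - apply set_ext; intro x; unfold setminus; destruct (classic (A x)); tauto.
Qed.

Lemma measure_bigcup_list_le {I : Type} (l : list I) (F : I -> X -> Prop) (c : R) :
  (forall i, In i l -> M (F i)) -> (forall i, In i l -> mu (F i) <= c) ->
  mu (bigcup_list l F) <= INR (length l) * c.
Proof.
  induction l as [|i l IH]; intros HF Hc.
  - rewrite bigcup_list_nil, (pr_empty Hp); simpl; lra.
  - rewrite bigcup_list_cons; simpl length; rewrite S_INR.
    assert (Hl : mu (bigcup_list l F) <= INR (length l) * c)
      by (apply IH; intros; [apply HF | apply Hc]; right; auto).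
    assert (Hi : mu (F i) <= c) by (apply Hc; left; auto).
    eapply Rle_trans.
    + apply measure_union_le;
        [apply HF; left | apply measurable_bigcup_list; intros; apply HF; right]; auto.
    + lra.
Qed.

End Probability.

Lemma cheeger_constant_le {G X : Type} {M : (X -> Prop) -> Prop} {mu : (X -> Prop) -> R}
    {act : X -> G -> X} {S : list G} {h : R} {B : X -> Prop} :
  cheeger_constant M mu act S h -> M B -> 0 < mu B -> mu B <= 1 / 2 ->
  h * mu B <= mu (setminus (set_act act B (fun s => In s S)) B).
Proof.
  intros [Hlb _] HB HB0 HB1.
  assert (Hratio : h <= mu (setminus (set_act act B (fun s => In s S)) B) / mu B)
    by (apply Hlb; exists B; auto).
  apply Rmult_le_compat_r with (r := mu B) in Hratio; [| lra].
  unfold Rdiv in Hratio; rewrite Rmult_assoc, Rinv_l in Hratio; lra.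
Qed.

Section RightAction.

Context {G : Type} {mul : G -> G -> G} {inv : G -> G} {one : G}.
Hypothesis Hgrp : is_group mul inv one.
Context {X : Type} {act : X -> G -> X}.
Hypothesis Hact : is_right_action mul one act.

Lemma act_mulK (x : X) (g : G) : act (act x g) (inv g) = x.
Proof. destruct Hact as [Hact1 HactM]; rewrite HactM, (grp_mulgV Hgrp), Hact1; auto. Qed.

Lemma act_mulVK (x : X) (g : G) : act (act x (inv g)) g = x.
Proof. destruct Hact as [Hact1 HactM]; rewrite HactM, (grp_mulVg Hgrp), Hact1; auto. Qed.

Lemma set_act_bigcup (A : X -> Prop) {T : G -> Prop} {l : list G} :
  (forall t, T t -> In t l) ->
  set_act act A T = bigcup_list l (fun t x => T t /\ preimage_act act (inv t) A x).
Proof.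
  intro HTl; apply set_ext; intro x; split.
  - intros [a [t [Ha [Ht ->]]]]; exists t; unfold preimage_act.
    rewrite act_mulK; auto.
  - intros [t [_ [Ht Hx]]]; exists (act x (inv t)), t.
    rewrite act_mulVK; auto.
Qed.

Lemma set_act_list (A : X -> Prop) (l : list G) :
  set_act act A (fun t => In t l) = bigcup_list l (fun t => preimage_act act (inv t) A).
Proof.
  rewrite (@set_act_bigcup A (fun t => In t l) l); auto.
  apply set_ext; intro x; split; intros [t [Ht Hx]]; exists t; intuition.
Qed.

Context {M : (X -> Prop) -> Prop} {mu : (X -> Prop) -> R}.
Hypothesis Hp : is_probability M mu.
Hypothesis Hmp : measure_preserving_action M mu act.

Lemma measurable_set_act {A : X -> Prop} {T : G -> Prop} {l : list G} :
  M A -> (forall t, T t -> In t l) -> M (set_act act A T).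
Proof.
  intros HA HTl; rewrite (set_act_bigcup A HTl).
  apply (measurable_bigcup_list Hp); intros t _.
  apply (measurable_and_const Hp), (Hmp (inv t) A HA).
Qed.

Lemma measure_set_act_list_le {A : X -> Prop} (l : list G) :
  M A -> mu (set_act act A (fun t => In t l)) <= INR (length l) * mu A.
Proof.
  intro HA; rewrite set_act_list.
  apply (measure_bigcup_list_le Hp); intros t _; [apply (Hmp _ A HA)|].
  rewrite (proj2 (Hmp _ A HA)); lra.
Qed.

Lemma measure_le_set_act {A : X -> Prop} {T : G -> Prop} {l : list G} {t : G} :
  M A -> (forall t, T t -> In t l) -> T t -> mu A <= mu (set_act act A T).
Proof.
  intros HA HTl Ht.
  rewrite <- (proj2 (Hmp (inv t) A HA)).
  apply (measure_mono Hp); [apply (Hmp _ A HA) | apply (measurable_set_act HA HTl)|].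
  intros x Hx; exists (act x (inv t)), t; rewrite act_mulVK; auto.
Qed.

Lemma cheeger_constant_ge0 {S : list G} {h : R} :
  cheeger_constant M mu act S h -> 0 <= h.
Proof.
  intros [_ Hglb]; apply Hglb.
  intros r [A [HA [HA0 [_ ->]]]].
  apply Rmult_le_pos; [| left; apply Rinv_0_lt_compat; auto].
  apply (pr_nonneg Hp), (measurable_setminus Hp); auto.
  apply (measurable_set_act (l := S)); auto.
Qed.

End RightAction.

(* [NS_set] is only a predicate; this list of all products c s p^-1 contains it,
   which is all that measurability of [A N(S,C)] needs. *)
Definition NS_candidates {G : Type} (mul : G -> G -> G) (inv : G -> G) (S C : list G) : list G :=
  flat_map (fun s => flat_map (fun c => map (fun p => mul (mul c s) (inv p)) C) C) S.

Lemma NS_set_candidates {G : Type} {mul : G -> G -> G} {inv : G -> G} {H : G -> Prop}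
    {S C : list G} (t : G) :
  NS_set mul inv H S C t -> In t (NS_candidates mul inv S C).
Proof.
  intros [s [c [p [Hs [Hc [Hp [_ ->]]]]]]].
  apply in_flat_map; exists s; split; auto.
  apply in_flat_map; exists c; split; auto.
  apply (in_map (fun p => mul (mul c s) (inv p))); auto.
Qed.

Lemma schreier_boundary_incl {G : Type} {mul : G -> G -> G} {inv : G -> G} {one : G}
    (Hgrp : is_group mul inv one) {X : Type} {act : X -> G -> X}
    (Hact : is_right_action mul one act) {H : G -> Prop} {S C : list G}
    (HC : right_transversal mul inv H C) (A : X -> Prop) (x : X) :
  setminus (set_act act (set_act act A (fun c => In c C)) (fun s => In s S))
           (set_act act A (fun c => In c C)) x ->
  set_act act (setminus (set_act act A (NS_set mul inv H S C)) A) (fun p => In p C) x.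
Proof.
  destruct Hact as [_ HactM].
  intros [[b [s [[a [c [Ha [Hc ->]]]] [Hs ->]]]] HnB].
  destruct (proj2 HC (mul c s)) as [p [[Hp HHp] _]].
  set (t := mul (mul c s) (inv p)).
  assert (Hx : act (act a c) s = act (act a t) p).
  { unfold t; rewrite !HactM, <- !(grp_assoc Hgrp), (grp_mulVg Hgrp), (grp_mulg1 Hgrp).
    reflexivity. }
  exists (act a t), p; repeat split; auto.
  - exists a, t; repeat split; auto; exists s, c, p; auto.
  - intro Hat; apply HnB; exists (act a t), p; auto.
Qed.

Lemma measure_schreier_boundary_le {G : Type} {mul : G -> G -> G} {inv : G -> G} {one : G}
    (Hgrp : is_group mul inv one) {X : Type} {act : X -> G -> X}
    (Hact : is_right_action mul one act) {M : (X -> Prop) -> Prop} {mu : (X -> Prop) -> R}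
    (Hp : is_probability M mu) (Hmp : measure_preserving_action M mu act)
    {H : G -> Prop} (S : list G) {C : list G} (HC : right_transversal mul inv H C)
    {A : X -> Prop} :
  M A ->
  mu (setminus (set_act act (set_act act A (fun c => In c C)) (fun s => In s S))
               (set_act act A (fun c => In c C)))
  <= INR (length C) * mu (setminus (set_act act A (NS_set mul inv H S C)) A).
Proof.
  intro HA.
  assert (HB : M (set_act act A (fun c => In c C)))
    by (apply (measurable_set_act Hgrp Hact Hp Hmp (l := C)); auto).
  assert (HE : M (setminus (set_act act A (NS_set mul inv H S C)) A)).
  { apply (measurable_setminus Hp); auto.
    apply (measurable_set_act Hgrp Hact Hp Hmp (l := NS_candidates mul inv S C)); auto.
    apply NS_set_candidates. }
  rewrite <- (measure_set_act_list_le Hgrp Hact Hp Hmp C HE).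
  apply (measure_mono Hp).
  - apply (measurable_setminus Hp); auto.
    apply (measurable_set_act Hgrp Hact Hp Hmp (l := S)); auto.
  - apply (measurable_set_act Hgrp Hact Hp Hmp (l := C)); auto.
  - apply (schreier_boundary_incl Hgrp Hact HC).
Qed.

Theorem mainTheorem14
  (G : Type) (mul : G -> G -> G) (inv : G -> G) (one : G)
  (Hgrp : is_group mul inv one)
  (X : Type) (M : (X -> Prop) -> Prop) (mu : (X -> Prop) -> R)
  (Hprob : is_probability M mu)
  (act : X -> G -> X) (Hact : is_right_action mul one act)
  (Hmp : measure_preserving_action M mu act)
  (Herg : ergodic M mu act)
  (S : list G) (HSsym : symmetric_set inv S) (HSgen : generates mul one S)
  (H : G -> Prop) (HH : is_subgroup mul inv one H)
  (k : nat) (C : list G) (HC : right_transversal mul inv H C) (Hk : length C = k)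
  (h : R) (Hh : cheeger_constant M mu act S h)
  (A : X -> Prop) (HA : M A) (HA0 : 0 < mu A) (HA1 : mu A <= 1 / (2 * INR k)) :
  mu (setminus (set_act act A (NS_set mul inv H S C)) A) / mu A >= h / INR k.
Proof.
  destruct (proj2 HC one) as [c0 [[Hc0 _] _]].
  assert (Hk0 : 0 < INR k) by (subst k; apply lt_0_INR; destruct C; [destruct Hc0 | simpl; lia]).
  set (E := setminus (set_act act A (NS_set mul inv H S C)) A).
  set (B := set_act act A (fun c => In c C)).
  assert (HB : M B) by (apply (measurable_set_act Hgrp Hact Hprob Hmp (l := C)); auto).
  assert (HAB : mu A <= mu B)
    by (apply (measure_le_set_act Hgrp Hact Hprob Hmp (l := C) (t := c0)); auto).
  assert (HBk : mu B <= INR k * mu A)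
    by (subst k; apply (measure_set_act_list_le Hgrp Hact Hprob Hmp); auto).
  assert (HB1 : mu B <= 1 / 2).
  { replace (1 / 2) with (INR k * (1 / (2 * INR k))) by (field; lra).
    apply Rmult_le_compat_l with (r := INR k) in HA1; lra. }
  pose proof (cheeger_constant_le Hh HB ltac:(lra) HB1) as HhB.
  pose proof (cheeger_constant_ge0 Hgrp Hact Hprob Hmp Hh) as Hh0.
  pose proof (measure_schreier_boundary_le Hgrp Hact Hprob Hmp S HC HA) as HBE.
  rewrite Hk in HBE; fold B E in HBE.
  apply Rle_ge, (Rmult_le_reg_r (INR k * mu A)); [nra|].
  replace (h / INR k * (INR k * mu A)) with (h * mu A) by (field; lra).
  replace (mu E / mu A * (INR k * mu A)) with (INR k * mu E) by (field; lra).
  nra.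
Qed.
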